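(* Suppose $L$ is a linear order with a first element such that $L/\!\sim_\omega\;\cong 1$ and $\operatorname{cf}(L)=\omega_1$, and suppose $L$ has a strictly increasing cofinal sequence $\langle x_\alpha:\alpha<\omega_1\rangle$ with $L=\bigcup_{\alpha<\omega_1}[x_\alpha,x_{\alpha+1})$. Then $L$ is isomorphic to a suborder of $U$.
   Context: The countable condensation $\sim_\omega$ on a linear order $L$: $x\sim_\omega y$ iff the closed interval between $x$ and $y$ is countable; $L/\!\sim_\omega\;\cong 1$ means all elements of $L$ are mutually $\sim_\omega$-equivalent. $\operatorname{cf}(L)$ is the least length of a strictly increasing cofinal sequence in $L$. $U$ is the linear order $R^*+\mathbb{Q}+R$, where $R$ is obtained from $\omega_1$ by replacing each $\alpha<\omega_1$ with a point $u_\alpha$ followed by a copy $\mathbb{Q}(\alpha)$ of the rationals (so $u_\alpha<\mathbb{Q}(\alpha)<u_{\alpha+1}$), $R^*$ is the reverse of $R$, and the middle summand is a copy of the rationals. *)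

From mathcomp Require Import all_boot all_order all_algebra.
Set Implicit Arguments. Unset Strict Implicit. Unset Printing Implicit Defensive.
Import Order.TTheory GRing.Theory Num.Theory.

Definition strict_linear_order {X : Type} (lt : X -> X -> Prop) : Prop :=
  (forall x, ~ lt x x) /\
  (forall x y z, lt x y -> lt y z -> lt x z) /\
  (forall x y, lt x y \/ x = y \/ lt y x).

Definition le_of {X : Type} (lt : X -> X -> Prop) (x y : X) : Prop :=
  lt x y \/ x = y.

Definition countable_set {X : Type} (A : X -> Prop) : Prop :=
  exists f : X -> nat, forall x y, A x -> A y -> f x = f y -> x = y.

Definition has_first {X : Type} (lt : X -> X -> Prop) : Prop :=
  exists m : X, forall y, le_of lt m y.

Definition closed_between {X : Type} (lt : X -> X -> Prop) (x y z : X) : Prop :=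
  (le_of lt x z /\ le_of lt z y) \/ (le_of lt y z /\ le_of lt z x).

Definition sim_omega {X : Type} (lt : X -> X -> Prop) (x y : X) : Prop :=
  countable_set (closed_between lt x y).

(* L / ~_omega is the one-point order: L nonempty and all points equivalent *)
Definition condensation_trivial {X : Type} (lt : X -> X -> Prop) : Prop :=
  (exists x : X, True) /\ forall x y : X, sim_omega lt x y.

Definition is_omega1 {W : Type} (ltW : W -> W -> Prop) : Prop :=
  strict_linear_order ltW /\ well_founded ltW /\
  (forall a : W, countable_set (fun b => ltW b a)) /\
  ~ countable_set (fun _ : W => True).

Definition is_succ {W : Type} (ltW : W -> W -> Prop) (a b : W) : Prop :=
  ltW a b /\ forall c, ltW a c -> le_of ltW b c.

Definition strictly_increasing {I X : Type} (ltI : I -> I -> Prop)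
  (lt : X -> X -> Prop) (s : I -> X) : Prop :=
  forall i j, ltI i j -> lt (s i) (s j).

Definition cofinal_seq {I X : Type} (lt : X -> X -> Prop) (s : I -> X) : Prop :=
  forall y : X, exists i : I, le_of lt y (s i).

(* the ordinal beta < omega_1, as the initial segment of W below beta *)
Definition below {W : Type} (ltW : W -> W -> Prop) (beta : W) : Type :=
  { b : W | ltW b beta }.

Definition below_lt {W : Type} (ltW : W -> W -> Prop) (beta : W)
  (i j : below ltW beta) : Prop := ltW (proj1_sig i) (proj1_sig j).

(* cf(L) = omega_1: the least length of a strictly increasing cofinal
   sequence in L is omega_1, i.e. there is one of length omega_1 and none of
   any length beta < omega_1. *)
Definition cf_is_omega1 {W X : Type} (ltW : W -> W -> Prop)
  (lt : X -> X -> Prop) : Prop :=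
  (exists s : W -> X, strictly_increasing ltW lt s /\ cofinal_seq lt s) /\
  (forall beta : W, ~ exists s : below ltW beta -> X,
       strictly_increasing (@below_lt W ltW beta) lt s /\ cofinal_seq lt s).

(* ---------- the order U = R^* + Q + R ---------- *)

(* R = omega_1 with each alpha replaced by u_alpha followed by Q(alpha):
   an element is (alpha, None) = u_alpha or (alpha, Some q) = q in Q(alpha). *)
Inductive Ucar (W : Type) : Type :=
| ULeft  : W -> option rat -> Ucar W
| UMid   : rat -> Ucar W
| URight : W -> option rat -> Ucar W.

Definition opt_lt (o o' : option rat) : Prop :=
  match o, o' with
  | None, Some _ => True
  | Some q, Some q' => (q < q')%R
  | _, _ => False
  end.

Definition R_lt {W : Type} (ltW : W -> W -> Prop) (a : W) (o : option rat)
  (a' : W) (o' : option rat) : Prop :=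
  ltW a a' \/ (a = a' /\ opt_lt o o').

Definition U_lt {W : Type} (ltW : W -> W -> Prop) (u v : Ucar W) : Prop :=
  match u, v with
  | ULeft a o, ULeft a' o' => R_lt ltW a' o' a o   (* reversed *)
  | ULeft _ _, _ => True
  | UMid q, UMid q' => (q < q')%R
  | UMid _, URight _ _ => True
  | URight a o, URight a' o' => R_lt ltW a o a' o'
  | _, _ => False
  end.

Definition embeds {X Y : Type} (ltX : X -> X -> Prop) (ltY : Y -> Y -> Prop) : Prop :=
  exists f : X -> Y, forall x y, ltX x y <-> ltY (f x) (f y).

From mathcomp Require Import all_boot all_order all_algebra.
From mathcomp Require Import boolp.
From Stdlib Require Import ClassicalEpsilon.
Set Implicit Arguments. Unset Strict Implicit. Unset Printing Implicit Defensive.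
Import Order.TTheory GRing.Theory Num.Theory.

(* Each block [[x_a, x_(a+1))] lies in the closed interval [[x_a, x_(a+1)]],
   which is countable because all points of [L] are [~_omega]-equivalent.
   A countable linear order embeds in [Q] greedily: enumerate it and give
   each new point a rational in the gap cut out by the finitely many points
   already placed, which exists since [Q] is dense without endpoints.
   Sending the block of [x_a] into the copy [Q(a)] of [R] gives an embedding
   into [U], because the blocks are ordered as their indices in [omega_1]. *)

Local Open Scope ring_scope.

Section DenseBounds.
Variable R : realFieldType.
Implicit Types (a q : R) (s lo hi : seq R).

Lemma exists_below_seq s : exists q, {in s, forall b, q < b}.
Proof.
elim: s => [|b s [q Hq]]; first by exists 0.
exists (Num.min q (b - 1)) => c; rewrite in_cons => /predU1P[->|/Hq qc].
  by rewrite gt_min ltrBlDr ltrDl ltr01 orbT.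
by rewrite gt_min qc.
Qed.

Lemma exists_between_point_seq a hi :
  {in hi, forall b, a < b} -> exists q, a < q /\ {in hi, forall b, q < b}.
Proof.
elim: hi => [|b hi IH] ahi; first by exists (a + 1); rewrite ltrDl ltr01.
have [|q [aq Hq]] := IH; first by move=> c hic; apply: ahi; rewrite in_cons hic orbT.
have [ab _] := midf_lt (ahi b (mem_head b hi)).
exists (Num.min q ((a + b) / 2)); rewrite lt_min aq ab; split=> // c.
rewrite in_cons => /predU1P[->|/Hq qc]; last by rewrite gt_min qc.
by rewrite gt_min (midf_lt (ahi b (mem_head b hi))).2 orbT.
Qed.

Lemma exists_between_seq lo hi :
  {in lo & hi, forall a b, a < b} ->
  exists q, {in lo, forall a, a < q} /\ {in hi, forall b, q < b}.
Proof.
elim: lo => [|a lo IH] lohi.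
  by have [q Hq] := exists_below_seq hi; exists q.
have [|q [Hlo Hhi]] := IH; first by move=> c d cl; apply: lohi; rewrite in_cons cl orbT.
have [aq|qa] := ltP a q.
  by exists q; split=> // c; rewrite in_cons => /predU1P[->|/Hlo].
have [|r [ar Hr]] := exists_between_point_seq (a := a) (hi := hi).
  by move=> b hib; apply: lohi => //; apply: mem_head.
exists r; split=> // c; rewrite in_cons => /predU1P[->//|/Hlo cq].
by apply: lt_trans ar; apply: lt_le_trans cq qa.
Qed.

End DenseBounds.

Lemma countable_set_sub (X : Type) (A B : X -> Prop) :
  (forall y, A y -> B y) -> countable_set B -> countable_set A.
Proof. by move=> AB [f finj]; exists f => y z Ay Az; apply: finj; apply: AB. Qed.

Section CountableEmbedding.
Variables (X : Type) (lt : X -> X -> Prop) (A : X -> Prop) (f : X -> nat).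
Hypotheses (lt_linear : strict_linear_order lt)
  (f_inj : forall y z, A y -> A z -> f y = f z -> y = z).

Definition index_lt (i j : nat) : Prop :=
  exists y z, [/\ A y, A z, f y = i, f z = j & lt y z].

Lemma index_lt_irrefl i : ~ index_lt i i.
Proof.
case: lt_linear => irr _ [y [z [Ay Az fy fz yz]]].
have yEz : y = z by apply: f_inj; rewrite // fy fz.
by subst z; apply: irr yz.
Qed.

Lemma index_lt_trans i j k : index_lt i j -> index_lt j k -> index_lt i k.
Proof.
case: lt_linear => _ [tr _] [y [z [Ay Az fy fz yz]]] [z' [w [Az' Aw fz' fw zw]]].
have zEz' : z = z' by apply: f_inj; rewrite // fz fz'.
by subst z'; exists y, w; split=> //; apply: tr _ _ _ yz zw.
Qed.

Definition index_monotone (s : seq rat) : Prop :=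
  forall i j, (i < size s)%N -> (j < size s)%N -> index_lt i j -> s`_i < s`_j.

(* [size s] is the index that receives the new value [q]. *)
Definition fits (s : seq rat) (q : rat) : Prop :=
  forall i, (i < size s)%N ->
    (index_lt i (size s) -> s`_i < q) /\ (index_lt (size s) i -> q < s`_i).

Lemma fits_exists s : index_monotone s -> exists q, fits s q.
Proof.
move=> smono; set n := size s.
pose side P := [seq s`_i | i <- iota 0 n & `[< P i >]].
have side_mem P i : (i < n)%N -> P i -> s`_i \in side P.
  move=> ilt Pi; apply: map_f.
  by rewrite mem_filter mem_iota ilt; apply/andP; split=> //; apply/asboolP.
have [|q [Hlo Hhi]] :=
  exists_between_seq (lo := side (index_lt^~ n)) (hi := side (index_lt n)).
  move=> _ _ /mapP[i + ->] /mapP[j + ->].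
  rewrite !mem_filter !mem_iota /= => /andP[/asboolP iln ilt] /andP[/asboolP nj jlt].
  by apply: smono => //; apply: index_lt_trans iln nj.
by exists q => i ilt; split=> H; [apply: Hlo | apply: Hhi]; apply: side_mem.
Qed.

Definition greedy_next (s : seq rat) : rat := epsilon (inhabits 0) (fits s).

Fixpoint greedy_prefix (n : nat) : seq rat :=
  if n is k.+1 then rcons (greedy_prefix k) (greedy_next (greedy_prefix k))
  else [::].

Definition greedy_value (i : nat) : rat := greedy_next (greedy_prefix i).

Lemma size_greedy_prefix n : size (greedy_prefix n) = n.
Proof. by elim: n => //= n IH; rewrite size_rcons IH. Qed.

Lemma nth_greedy_prefix n i : (i < n)%N -> (greedy_prefix n)`_i = greedy_value i.
Proof.
elim: n => // n IH; rewrite ltnS leq_eqVlt => /predU1P[->|ilt] /=;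
  by rewrite nth_rcons size_greedy_prefix ?ltnn ?eqxx ?ilt ?IH.
Qed.

Lemma greedy_value_fits n :
  (forall i j, (i < n)%N -> (j < n)%N -> index_lt i j ->
     greedy_value i < greedy_value j) ->
  forall i, (i < n)%N ->
    (index_lt i n -> greedy_value i < greedy_value n) /\
    (index_lt n i -> greedy_value n < greedy_value i).
Proof.
move=> mono; have: fits (greedy_prefix n) (greedy_value n).
  apply: epsilon_spec; apply: fits_exists => i j.
  rewrite size_greedy_prefix => ilt jlt ij.
  by rewrite !nth_greedy_prefix //; apply: mono.
rewrite /fits size_greedy_prefix => fitn i ilt.
by rewrite -(nth_greedy_prefix ilt); apply: fitn.
Qed.

Lemma greedy_value_monotone_below n i j :
  (i < n)%N -> (j < n)%N -> index_lt i j -> greedy_value i < greedy_value j.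
Proof.
elim: n i j => // n IH i j; have fitn := greedy_value_fits IH.
rewrite ltnS leq_eqVlt => /predU1P[->|ilt]; rewrite ltnS leq_eqVlt => /predU1P[->|jlt] ij.
- by case: (index_lt_irrefl ij).
- exact: (fitn j jlt).2.
- exact: (fitn i ilt).1.
- exact: IH.
Qed.

Lemma greedy_value_monotone y z :
  A y -> A z -> lt y z -> greedy_value (f y) < greedy_value (f z).
Proof.
move=> Ay Az yz; apply: (@greedy_value_monotone_below (maxn (f y) (f z)).+1).
- by rewrite ltnS leq_maxl.
- by rewrite ltnS leq_maxr.
- by exists y, z.
Qed.

End CountableEmbedding.

Lemma countable_embeds_rat (X : Type) (lt : X -> X -> Prop) (A : X -> Prop) :
  strict_linear_order lt -> countable_set A ->
  exists g : X -> rat, forall y z, A y -> A z -> lt y z -> g y < g z.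
Proof.
move=> lt_linear [f finj].
by exists (fun y => greedy_value lt A f (f y)); apply: greedy_value_monotone.
Qed.

Lemma embeds_of_countable_blocks (W : Type) (ltW : W -> W -> Prop)
  (L : Type) (ltL : L -> L -> Prop) (blk : L -> W) :
  strict_linear_order ltW -> strict_linear_order ltL ->
  (forall y z, ltW (blk y) (blk z) -> ltL y z) ->
  (forall a, countable_set (fun y => blk y = a)) ->
  embeds ltL (U_lt ltW).
Proof.
move=> [_ [_ triW]] ltL_linear blk_mono blk_count.
have [irr [tr tri]] := ltL_linear.
have [g gmono] : {g : W -> L -> rat & forall a y z,
    blk y = a -> blk z = a -> ltL y z -> g a y < g a z}.
  apply: (@boolp.choice _ _ (fun a (g : L -> rat) =>
    forall y z, blk y = a -> blk z = a -> ltL y z -> g y < g z)) => a.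
  exact: countable_embeds_rat.
exists (fun y => URight (blk y) (Some (g (blk y) y))) => y z /=; rewrite /R_lt /=.
split=> [yz|[/blk_mono//|[bE gyz]]]; last first.
  have [//|[yEz|zy]] := tri y z; first by subst z; rewrite ltxx in gyz.
  by rewrite bE in gyz; have := lt_trans gyz (gmono _ _ _ erefl bE zy); rewrite ltxx.
have [byz|[bE|bzy]] := triW (blk y) (blk z); first by left.
  by right; split=> //; rewrite bE; apply: gmono.
by case: (irr _ (tr _ _ _ yz (blk_mono _ _ bzy))).
Qed.

Lemma is_succ_unique (W : Type) (ltW : W -> W -> Prop) a b b' :
  strict_linear_order ltW -> is_succ ltW a b -> is_succ ltW a b' -> b = b'.
Proof.
move=> [irr [tr _]] [ab bmin] [ab' b'min].
case: (bmin b' ab') => [bb'|//]; case: (b'min b ab) => [b'b|//].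
by case: (irr _ (tr _ _ _ bb' b'b)).
Qed.

Lemma lt_le_of_trans (X : Type) (lt : X -> X -> Prop) u v w :
  strict_linear_order lt -> lt u v -> le_of lt v w -> lt u w.
Proof. by move=> [_ [tr _]] uv [vw|<-] //; apply: tr _ _ _ uv vw. Qed.

Lemma le_of_strictly_increasing (I X : Type) (ltI : I -> I -> Prop)
  (lt : X -> X -> Prop) (s : I -> X) i j :
  strictly_increasing ltI lt s -> le_of ltI i j -> le_of lt (s i) (s j).
Proof. by move=> s_incr [ij|<-]; [left; apply: s_incr | right]. Qed.

Section SuccessorBlocks.
Variables (W : Type) (ltW : W -> W -> Prop) (L : Type) (ltL : L -> L -> Prop).
Variables (x : W -> L) (blk : L -> W).
Hypotheses (ltW_linear : strict_linear_order ltW) (ltL_linear : strict_linear_order ltL)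
  (x_incr : strictly_increasing ltW ltL x)
  (blkP : forall y, exists b,
      is_succ ltW (blk y) b /\ le_of ltL (x (blk y)) y /\ ltL y (x b)).

Lemma blk_mono y z : ltW (blk y) (blk z) -> ltL y z.
Proof.
have [b [[_ bmin] [_ ylt]]] := blkP y; have [_ [_ [xz _]]] := blkP z.
move=> /bmin /(le_of_strictly_increasing x_incr) xb.
exact: lt_le_of_trans ltL_linear (lt_le_of_trans ltL_linear ylt xb) xz.
Qed.

Lemma blk_countable :
  (forall u v, sim_omega ltL u v) -> forall a, countable_set (fun y => blk y = a).
Proof.
move=> cond a; have [[y0 y0a]|nofib] := classic (exists y0, blk y0 = a); last first.
  by exists (fun=> 0%N) => y z ya; case: nofib; exists y.
have [b [ab _]] := blkP y0; rewrite y0a in ab.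
apply: (countable_set_sub _ (cond (x a) (x b))) => y ya; left.
have [b' [ab' [ay yb']]] := blkP y; rewrite ya in ab' ay.
by rewrite (is_succ_unique ltW_linear ab ab'); split=> //; left.
Qed.

End SuccessorBlocks.

Theorem proposition3p12
  (W : Type) (ltW : W -> W -> Prop) (HW : is_omega1 ltW)
  (L : Type) (ltL : L -> L -> Prop) (HL : strict_linear_order ltL)
  (Hfirst : has_first ltL)
  (Hcond : condensation_trivial ltL)
  (Hcf : cf_is_omega1 ltW ltL)
  (x : W -> L)
  (Hx_incr : strictly_increasing ltW ltL x)
  (Hx_cof : cofinal_seq ltL x)
  (Hx_union : forall y : L, exists a b : W,
      is_succ ltW a b /\ le_of ltL (x a) y /\ ltL y (x b)) :
  embeds ltL (U_lt ltW).
Proof.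
have ltW_linear := HW.1.
have [blk blkP] := boolp.choice Hx_union.
apply: (embeds_of_countable_blocks (blk := blk)) => //.
- exact: blk_mono blkP.
- exact: blk_countable blkP Hcond.2.
Qed.
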